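(* Consider $N$ sellers $i=1,\dots,N$ over a time horizon $[0,H]$, a reserve-utility function $\underline{R}:[0,H]\to\mathbb{R}$, and selection functions $f_i:\mathbb{R}^N\times\mathbb{R}\to\mathbb{R}$. Each seller $i$ has true-metric functions $e_i^T,e_i^C:[0,H]\to\mathbb{R}$ (under treatment/control) and estimated-score functions $\hat e_i^T,\hat e_i^C:[0,H]\to\mathbb{R}$. Suppose $\hat e_i^C(t)=\hat e_i^T(t)$ for all $i=1,\dots,N$ and $t\in[0,H]$. In the naive seller-side experiment without feedback loops (defined in the context), let each seller be independently assigned to the treatment group $\mathcal{T}$ with probability $p\in(0,1)$ and otherwise to the control group $\mathcal{C}$. Then the estimator $\widehat{GTE}$ is unbiased for $\mathrm{GTE}$, i.e. $\mathbb{E}[\widehat{GTE}]=\mathrm{GTE}$, where the expectation is over the random assignment.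
   Context: Setting without feedback loops: the ranking score of a seller equals its estimated score. Global treatment regime: for all $i$ and $t$, $r_i^{GT}(t)=\hat e_i^T(t)$, $I_i^{GT}(t)=\mathbb{I}\{f_i(r_1^{GT}(t),\dots,r_N^{GT}(t),\underline{R}(t))\ge 0\}$, $O_i^{GT}(t)=I_i^{GT}(t)e_i^T(t)$. Global control regime: the same with $\hat e_i^C$ and $e_i^C$ in place of $\hat e_i^T$ and $e_i^T$, giving $r_i^{GC},I_i^{GC},O_i^{GC}$. The global treatment effect is $\mathrm{GTE}=\frac1N\sum_{i=1}^N\int_0^H\big(O_i^{GT}(t)-O_i^{GC}(t)\big)dt$. Naive seller-side experiment: given a partition $\{1,\dots,N\}=\mathcal{T}\cup\mathcal{C}$ (disjoint), for $i\in\mathcal{T}$ set $E=T$ and for $i\in\mathcal{C}$ set $E=C$; then $r_i^E(t)=\hat e_i^E(t)$, $I_i^E(t)=\mathbb{I}\{f_i(\{r_j^T(t):j\in\mathcal{T}\}\cup\{r_j^C(t):j\in\mathcal{C}\},\underline{R}(t))\ge0\}$ (i.e. $f_i$ evaluated at the vector whose $j$-th entry is seller $j$'s own-group score), and $O_i^E(t)=I_i^E(t)e_i^E(t)$. The estimator is $\widehat{GTE}=\frac{1}{Np}\sum_{i\in\mathcal{T}}\int_0^H O_i^T(t)dt-\frac{1}{N(1-p)}\sum_{i\in\mathcal{C}}\int_0^H O_i^C(t)dt$. *)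

From HB Require Import structures.
From mathcomp Require Import all_boot all_order all_algebra.
From mathcomp Require Import all_classical all_reals all_analysis.
Set Implicit Arguments. Unset Strict Implicit. Unset Printing Implicit Defensive.
Import Order.TTheory GRing.Theory Num.Theory.
Local Open Scope classical_set_scope.
Local Open Scope ring_scope.

Section Market.
Variable R : realType.
Variable N : nat.

Definition horizon_int (H : R) (g : R -> R) : R :=
  Rintegral (@lebesgue_measure R) `[0, H] g.

Definition sel_ind (f : 'I_N -> 'rV[R]_N -> R -> R) (Rlow : R -> R)
    (r : 'I_N -> R -> R) (i : 'I_N) (t : R) : R :=
  if 0 <= f i (\row_j r j t) (Rlow t) then 1 else 0.

(* global treatment / control outcomes: ranking score = estimated score *)
Definition O_global (f : 'I_N -> 'rV[R]_N -> R -> R) (Rlow : R -> R)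
    (ehat e : 'I_N -> R -> R) (i : 'I_N) (t : R) : R :=
  sel_ind f Rlow ehat i t * e i t.

Definition GTE (H : R) (f : 'I_N -> 'rV[R]_N -> R -> R) (Rlow : R -> R)
    (eT eC ehT ehC : 'I_N -> R -> R) : R :=
  N%:R^-1 * \sum_(i < N)
    horizon_int H (fun t => O_global f Rlow ehT eT i t - O_global f Rlow ehC eC i t).

Definition grp (Tset : {set 'I_N}) (xT xC : 'I_N -> R -> R) : 'I_N -> R -> R :=
  fun j t => if j \in Tset then xT j t else xC j t.

Definition O_naive (Tset : {set 'I_N}) (f : 'I_N -> 'rV[R]_N -> R -> R)
    (Rlow : R -> R) (eT eC ehT ehC : 'I_N -> R -> R) (i : 'I_N) (t : R) : R :=
  sel_ind f Rlow (grp Tset ehT ehC) i t * grp Tset eT eC i t.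

Definition GTE_hat (p H : R) (Tset : {set 'I_N}) (f : 'I_N -> 'rV[R]_N -> R -> R)
    (Rlow : R -> R) (eT eC ehT ehC : 'I_N -> R -> R) : R :=
  (N%:R * p)^-1 * \sum_(i in Tset) horizon_int H (O_naive Tset f Rlow eT eC ehT ehC i)
  - (N%:R * (1 - p))^-1 * \sum_(i in ~: Tset) horizon_int H (O_naive Tset f Rlow eT eC ehT ehC i).

(* probability of assignment Tset when each seller is independently
   treated with probability p *)
Definition assign_prob (p : R) (Tset : {set 'I_N}) : R :=
  p ^+ #|Tset| * (1 - p) ^+ (N - #|Tset|).

Definition expect_assign (p : R) (X : {set 'I_N} -> R) : R :=
  \sum_(Tset : {set 'I_N}) assign_prob p Tset * X Tset.

End Market.

From HB Require Import structures.
From mathcomp Require Import all_boot all_order all_algebra.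
From mathcomp Require Import all_classical all_reals all_analysis.
From mathcomp Require Import ring.
Import Order.TTheory GRing.Theory Num.Theory.
Local Open Scope classical_set_scope.
Local Open Scope ring_scope.

(* When the estimated scores do not depend on the treatment, the naive
   experiment ranks every seller exactly as both global regimes do, so each
   seller's outcome in the experiment is its own global-treatment or
   global-control outcome according to its group; there is no interference.
   The estimator is then a sum of per-seller terms, each depending only on
   that seller's independent Bernoulli(p) assignment, and the weights
   1/p and 1/(1-p) undo the assignment probabilities. *)

Section Assignment.
Variables (R : realType) (N : nat) (p : R).

Lemma assign_probE (T : {set 'I_N}) :
  assign_prob p T = \prod_j (if j \in T then p else 1 - p).
Proof.
rewrite /assign_prob (bigID (mem T)) /=.
rewrite (eq_bigr (fun=> p)); last by move=> j ->.
rewrite [X in _ = _ * X](eq_bigr (fun=> 1 - p)); last by move=> j /negbTE ->.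
rewrite !prodr_const; congr (_ * _ ^+ _).
transitivity #|~: T|; last by apply: eq_card => j; rewrite inE.
by rewrite [#|~: T|]cardsCs finset.setCK card_ord.
Qed.

Lemma expect_assign_sum (I : finType) (X : I -> {set 'I_N} -> R) :
  expect_assign p (fun T => \sum_i X i T) = \sum_i expect_assign p (X i).
Proof. by rewrite /expect_assign exchange_big; apply: eq_bigr => T _; rewrite mulr_sumr. Qed.

Lemma expect_assign_if (i : 'I_N) (x y : R) :
  expect_assign p (fun T => if i \in T then x else y) = p * x + (1 - p) * y.
Proof.
pose F j := if j == i then p * x else p.
pose G j := if j == i then (1 - p) * y else 1 - p.
transitivity (\sum_(T : {set 'I_N}) \prod_j (if j \in T then F j else G j)).
  apply: eq_bigr => T _; rewrite assign_probE (bigD1 i) //= [RHS](bigD1 i) //=.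
  rewrite /F /G eqxx -mulrA [_ * (if _ then _ else _)]mulrC mulrA.
  congr (_ * _); first by case: (i \in T).
  by apply: eq_bigr => j /negbTE ji; rewrite ji.
rewrite -bigA_distr (bigD1 i) //= big1 ?mulr1 /F /G ?eqxx //.
by move=> j /negbTE ->; rewrite subrKC.
Qed.

End Assignment.

Section NoFeedback.
Variables (R : realType) (N : nat) (H : R) (Rlow : R -> R).
Variables (f : 'I_N -> 'rV[R]_N -> R -> R) (eT eC ehT ehC : 'I_N -> R -> R).

Lemma sel_ind_eq (r r' : 'I_N -> R -> R) i t :
  (forall j, r j t = r' j t) -> sel_ind f Rlow r i t = sel_ind f Rlow r' i t.
Proof.
move=> rr'; rewrite /sel_ind; congr (if 0 <= f i _ _ then _ else _).
by apply/rowP => j; rewrite !mxE.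
Qed.

Lemma GTEE :
  (forall i, (@lebesgue_measure R).-integrable `[0, H]
     (fun t => (O_global f Rlow ehT eT i t)%:E)) ->
  (forall i, (@lebesgue_measure R).-integrable `[0, H]
     (fun t => (O_global f Rlow ehC eC i t)%:E)) ->
  GTE H f Rlow eT eC ehT ehC =
  N%:R^-1 * \sum_i (horizon_int H (O_global f Rlow ehT eT i)
                    - horizon_int H (O_global f Rlow ehC eC i)).
Proof.
move=> intT intC; congr (_ * _); apply: eq_bigr => i _.
by rewrite /horizon_int RintegralB //; [exact: intT | exact: intC].
Qed.

Hypothesis ehC_eq_ehT : forall i t, 0 <= t <= H -> ehC i t = ehT i t.

Lemma O_naive_global (T : {set 'I_N}) i t : 0 <= t <= H ->
  O_naive T f Rlow eT eC ehT ehC i t =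
  if i \in T then O_global f Rlow ehT eT i t else O_global f Rlow ehC eC i t.
Proof.
move=> tH; have grpE j : grp T ehT ehC j t = ehT j t.
  by rewrite /grp; case: ifP => // _; exact: ehC_eq_ehT.
rewrite /O_naive (sel_ind_eq _ _ i t grpE) /O_global /grp.
by case: ifP => // _; rewrite (sel_ind_eq ehT ehC) // => j; rewrite ehC_eq_ehT.
Qed.

Lemma horizon_int_O_naive (T : {set 'I_N}) i :
  horizon_int H (O_naive T f Rlow eT eC ehT ehC i) =
  if i \in T then horizon_int H (O_global f Rlow ehT eT i)
  else horizon_int H (O_global f Rlow ehC eC i).
Proof.
rewrite /horizon_int; case: ifP => iT; apply: eq_Rintegral => t;
  rewrite inE /= in_itv /= => tH; have := O_naive_global T i _ tH; rewrite iT; apply.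
Qed.

Lemma GTE_hatE (p : R) (T : {set 'I_N}) :
  GTE_hat p H T f Rlow eT eC ehT ehC =
  \sum_i (if i \in T then (N%:R * p)^-1 * horizon_int H (O_global f Rlow ehT eT i)
          else - ((N%:R * (1 - p))^-1 * horizon_int H (O_global f Rlow ehC eC i))).
Proof.
rewrite /GTE_hat !mulr_sumr -sumrN [RHS](bigID (mem T)) /=.
congr (_ + _); apply: eq_big => [i|i]; rewrite ?inE // => iT.
  by rewrite horizon_int_O_naive iT.
by rewrite horizon_int_O_naive (negbTE iT).
Qed.

End NoFeedback.

Theorem proposition1 (R : realType) (N : nat) (H p : R) (Rlow : R -> R)
    (f : 'I_N -> 'rV[R]_N -> R -> R) (eT eC ehT ehC : 'I_N -> R -> R) :
  (0 < N)%N -> 0 < p < 1 ->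
  (forall (i : 'I_N) (t : R), 0 <= t <= H -> ehC i t = ehT i t) ->
  (forall i : 'I_N, (@lebesgue_measure R).-integrable `[0, H]
       (fun t => (O_global f Rlow ehT eT i t)%:E)) ->
  (forall i : 'I_N, (@lebesgue_measure R).-integrable `[0, H]
       (fun t => (O_global f Rlow ehC eC i t)%:E)) ->
  expect_assign p (fun Tset => GTE_hat p H Tset f Rlow eT eC ehT ehC)
  = GTE H f Rlow eT eC ehT ehC.
Proof.
move=> N_gt0 /andP[p_gt0 p_lt1] ehC_eq_ehT intT intC.
under [X in expect_assign _ X]eq_fun => T do rewrite GTE_hatE //.
rewrite expect_assign_sum GTEE // mulr_sumr; apply: eq_bigr => i _.
rewrite expect_assign_if.
have N_neq0 : N%:R != 0 :> R by rewrite pnatr_eq0 -lt0n.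
have p_neq0 : p != 0 by rewrite gt_eqF.
have q_neq0 : 1 - p != 0 by rewrite subr_eq0 eq_sym lt_eqF.
by field; rewrite N_neq0 p_neq0 q_neq0.
Qed.
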